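(* Let $B\in\mathbb{R}^{p\times H}$ be the incidence matrix described in the context, and assume the set of paths is nonempty. Then the all-ones vector $\mathbf 1\in\mathbb{R}^p$ does not belong to the column space of $B$.
   Context: $\mathcal G=(V,E)$ is a finite DAG; input neurons have no incoming edges, output neurons no outgoing edges, hidden neurons $\mathcal H$ ($H=|\mathcal H|$) are the rest. The parameter vector $\theta\in\mathbb{R}^p$ consists of one weight per edge and one bias $b_v$ per non-input neuron $v$. For $h\in\mathcal H$, $\mathrm{in}_h$ = indices of $b_h$ and of the weights of edges entering $h$, $\mathrm{out}_h$ = indices of the weights of edges leaving $h$. $B$ has columns indexed by $h\in\mathcal H$: $B_{ih}=-1$ if $i\in\mathrm{in}_h$, $1$ if $i\in\mathrm{out}_h$, $0$ otherwise. A path is a sequence $v_0\to\cdots\to v_d$ ($d\ge0$) along edges ending at an output neuron, where for $d=0$ the neuron $v_0$ is not an input neuron. *)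

From mathcomp Require Import all_boot all_order all_algebra.
Set Implicit Arguments. Unset Strict Implicit. Unset Printing Implicit Defensive.
Import Order.TTheory GRing.Theory Num.Theory.
Local Open Scope ring_scope.

(* A neural-network architecture: a finite directed graph (V, e), where
   [e u v] means there is an edge u -> v. *)
Section Network.
Variables (V : finType) (e : rel V).

Definition dag : Prop := forall u v, e u v -> ~~ connect e v u.

Definition is_input (v : V) : bool := [forall u, ~~ e u v].
Definition is_output (v : V) : bool := [forall w, ~~ e v w].
Definition is_hidden (v : V) : bool := ~~ is_input v && ~~ is_output v.

Definition edgeT : finType := {x : V * V | e x.1 x.2}.
Definition hiddenT : finType := {v : V | is_hidden v}.
Definition noninputT : finType := {v : V | ~~ is_input v}.
(* parameter indices: one weight per edge, one bias per non-input neuron *)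
Definition paramT : finType := (edgeT + noninputT)%type.

Definition in_h (h : V) (i : paramT) : bool :=
  match i with inl x => (val x).2 == h | inr v => val v == h end.
Definition out_h (h : V) (i : paramT) : bool :=
  match i with inl x => (val x).1 == h | inr _ => false end.

Definition Bentry (R : pzRingType) (i : paramT) (h : hiddenT) : R :=
  if in_h (val h) i then -1 else if out_h (val h) i then 1 else 0.

Definition Bmx (R : pzRingType) : 'M[R]_(#|paramT|, #|hiddenT|) :=
  \matrix_(i, j) Bentry R (enum_val i) (enum_val j).

(* a path v_0 -> ... -> v_d (the list s = [:: v_0; ...; v_d]) along edges, ending
   at an output neuron; if d = 0 then v_0 must not be an input neuron *)
Definition is_nn_path (s : seq V) : bool :=
  match s with
  | [::] => false
  | v0 :: s' => [&& path e v0 s', is_output (last v0 s') & (s' != [::]) || ~~ is_input v0]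
  end.

End Network.

From mathcomp Require Import all_boot all_order all_algebra.
Import Order.TTheory GRing.Theory Num.Theory.
Local Open Scope ring_scope.

(* The last neuron of a path is an output neuron that is not an input neuron,
   hence not hidden; so its bias belongs to no set in_h or out_h, and the
   corresponding row of B vanishes.  Every vector B c therefore has a zero
   entry, and cannot be the all-ones vector. *)

Section IncidenceMatrix.
Variables (V : finType) (e : rel V).

Lemma nn_path_last_output (v0 : V) (s : seq V) :
  is_nn_path e (v0 :: s) -> is_output e (last v0 s) && ~~ is_input e (last v0 s).
Proof.
case/and3P=> p_s out_last; case/lastP: s p_s out_last => [|t x] /=.
  by move=> _ -> ->.
rewrite last_rcons rcons_path => /andP[_ e_x] -> _ /=.
by apply/negP=> /forallP/(_ (last v0 t)); rewrite e_x.
Qed.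

Lemma Bentry_bias_nonhidden (R : pzRingType) (v : noninputT e) (h : hiddenT e) :
  ~~ is_hidden e (val v) -> Bentry R (inr v) h = 0.
Proof.
rewrite /Bentry /=; case: eqP => // v_h.
by rewrite v_h (valP h).
Qed.

Lemma row_Bmx_bias_nonhidden (R : pzRingType) (v : noninputT e) :
  ~~ is_hidden e (val v) -> row (enum_rank (inr v : paramT e)) (Bmx e R) = 0.
Proof.
by move=> v_nonhidden; apply/rowP=> j; rewrite !mxE enum_rankK Bentry_bias_nonhidden.
Qed.

Lemma const1_notin_col_Bmx (R : nzRingType) :
  (exists w, is_output e w && ~~ is_input e w) ->
  ~ exists c : 'cV[R]_#|hiddenT e|, Bmx e R *m c = const_mx 1.
Proof.
case=> w /andP[out_w noninput_w] [c Bc1].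
pose i : paramT e := inr (Sub w noninput_w : noninputT e).
have row_i_eq0 : row (enum_rank i) (Bmx e R) = 0.
  by apply: row_Bmx_bias_nonhidden; rewrite /is_hidden out_w andbF.
move/(congr1 (fun M => row (enum_rank i) M 0 0)): Bc1.
by rewrite /= row_mul row_i_eq0 mul0mx !mxE => /esym/eqP; rewrite oner_eq0.
Qed.

End IncidenceMatrix.

Theorem lemmaF5 (R : realFieldType) (V : finType) (e : rel V)
  (hdag : dag e) (hpath : exists s : seq V, is_nn_path e s) :
  ~ exists c : 'cV[R]_#|hiddenT e|, Bmx e R *m c = const_mx 1.
Proof.
apply: const1_notin_col_Bmx.
case: hpath => [[|v0 s] //] /nn_path_last_output out_last.
by exists (last v0 s).
Qed.
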